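(* Let $G=(V,E)$ be a finite simple graph on $n$ vertices with adjacency matrix $A$ having eigenvalues $\lambda_1\ge\cdots\ge\lambda_n$, let $k\ge1$, and let $p\in\mathbb{R}_k[x]$ be such that $p(\lambda_1)>p(\lambda_i)$ for all $i\in\{2,\dots,n\}$. Let $W(p):=\max_{u\in V}(p(A))_{uu}$ and $\lambda(p):=\min_{2\le i\le n}p(\lambda_i)$. Then $$\chi_{kq}(G)\ \ge\ \frac{p(\lambda_1)-\lambda(p)}{W(p)-\lambda(p)}.$$
   Context: $\mathbb{R}_k[x]$ denotes the real polynomials of degree at most $k$. $\mathrm{dist}$ is the graph distance in $G$, $[c]=\{1,\dots,c\}$. A quantum $k$-distance $c$-coloring of $G$ is a collection of orthogonal projectors $\{P_{v,h} : v\in V, h\in[c]\}$ in $\mathbb{C}^{d\times d}$ (some $d\ge1$) with $\sum_{h}P_{v,h}=I_d$ for each $v$ and $P_{v,h}P_{w,h}=0$ for all distinct $v,w$ with $\mathrm{dist}(v,w)\le k$ and all $h$. $\chi_{kq}(G)$ is the smallest $c$ admitting such a coloring for some $d>0$; equivalently the quantum chromatic number of the $k$-th power graph $G^k$. *)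

From HB Require Import structures.
From mathcomp Require Import all_boot all_order all_algebra.
From mathcomp Require Import sesquilinear spectral.
From mathcomp Require Import complex.
From mathcomp Require Import reals.

Set Implicit Arguments.
Unset Strict Implicit.
Unset Printing Implicit Defensive.

Import Order.TTheory GRing.Theory Num.Theory.
Local Open Scope ring_scope.

Definition simple_graph (n : nat) (G : rel 'I_n) : Prop :=
  symmetric G /\ irreflexive G.

Definition adjmx (R : pzRingType) (n : nat) (G : rel 'I_n) : 'M[R]_n :=
  \matrix_(i, j) (G i j)%:R.

Definition dist_le (n : nat) (G : rel 'I_n) (k : nat) (v w : 'I_n) : Prop :=
  exists s : seq 'I_n, [/\ (size s <= k)%N, path G v s & last v s = w].

Definition orth_proj (C : numClosedFieldType) (d : nat) (P : 'M[C]_d) : Prop :=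
  P *m P = P /\ (P ^t* )%sesqui = P.

Definition quantum_kdist_coloring (C : numClosedFieldType) (n : nat)
    (G : rel 'I_n) (k c d : nat) (P : 'I_n -> 'I_c -> 'M[C]_d) : Prop :=
  [/\ forall v h, orth_proj (P v h),
      forall v, \sum_(h < c) P v h = 1%:M
    & forall v w h, v != w -> dist_le G k v w -> P v h *m P w h = 0].

(* G admits a quantum k-distance c-coloring over C = R[i] in some dimension
   d > 0;  chi_kq(G) is the least such c. *)
Definition has_qkcoloring (R : rcfType) (n : nat) (G : rel 'I_n) (k c : nat)
    : Prop :=
  exists (d : nat) (P : 'I_n -> 'I_c -> 'M[R[i]]_d),
    (0 < d)%N /\ quantum_kdist_coloring G k P.

Definition Wp (R : realDomainType) (n : nat) (A : 'M[R]_n.+1) (p : {poly R}) : R :=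
  \big[Num.max/(horner_mx A p) ord0 ord0]_(u < n.+1) (horner_mx A p) u u.

(* lambda(p) = min_{2 <= i <= n} p(lambda_i), eigenvalues indexed by 'I_n.+1
   with lam ord0 = lambda_1 (the default ord_max belongs to the range when
   n >= 1). *)
Definition lamp (R : realDomainType) (n : nat) (lam : 'I_n.+1 -> R)
    (p : {poly R}) : R :=
  \big[Num.min/p.[lam ord_max]]_(i < n.+1 | i != ord0) p.[lam i].

(* Put q := p - lambda(p) and M := q(A).  As q >= 0 on the spectrum of A, M
   is positive semidefinite, and as deg q <= k, M_vw = 0 unless
   dist(v, w) <= k.  Let x be an eigenvector for lambda_1, P_{v,h} a quantum
   k-distance c-coloring and e a fixed unit vector.  The c matrices
   a_h := (x_v P_{v,h} e)_v sum to x (x) e, and the psd form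
   B(U, V) := Tr(U^* M V) satisfies B(S, S) <= c sum_h B(a_h, a_h) for
   S := sum_h a_h.  The left side is q(lambda_1) |x|^2; on the right the
   cross terms vanish, because P_{v,h} P_{w,h} = 0 whenever M_vw <> 0 with
   v <> w, leaving sum_v x_v^2 M_vv <= (W(p) - lambda(p)) |x|^2. *)

From HB Require Import structures.
From mathcomp Require Import all_boot all_order all_algebra.
From mathcomp Require Import sesquilinear spectral complex reals.
From mathcomp Require Import ring.
Import Order.TTheory GRing.Theory Num.Theory.
Set Implicit Arguments.
Unset Strict Implicit.
Unset Printing Implicit Defensive.

Local Open Scope ring_scope.
Local Open Scope sesquilinear_scope.

Lemma sumr_neq0_exists (V : nmodType) (I : finType) (F : I -> V) :
  \sum_i F i != 0 -> exists i, F i != 0.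
Proof.
move=> nz; apply/existsP; apply: contraR nz => /existsPn F0.
by apply/eqP/big1 => i _; apply/eqP/negPn/F0.
Qed.

Lemma mulr_neq0P (R : pzSemiRingType) (a b : R) :
  a * b != 0 -> (a != 0) && (b != 0).
Proof.
by apply: contraR; case/nandP => /negPn/eqP->; rewrite ?mul0r ?mulr0.
Qed.

Lemma adjmx_tr (R : pzRingType) n (G : rel 'I_n) :
  symmetric G -> (adjmx R G)^T = adjmx R G.
Proof. by move=> G_sym; apply/matrixP => v w; rewrite !mxE G_sym. Qed.

Lemma adjmx_exp_neq0_path (R : pzRingType) n (G : rel 'I_n.+1) i
    (v w : 'I_n.+1) :
  (adjmx R G ^+ i) v w != 0 ->
  exists s : seq 'I_n.+1, [/\ size s = i, path G v s & last v s = w].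
Proof.
elim: i w => [|i IH] w.
  rewrite expr0 mxE; case: (eqVneq v w) => [<- _|]; last by rewrite eqxx.
  by exists [::].
rewrite exprSr mxE => /sumr_neq0_exists [u].
case/mulr_neq0P/andP => /IH [s [<- Gs <-]].
rewrite mxE; case Guw: (G _ w); last by rewrite eqxx.
by exists (rcons s w); rewrite size_rcons rcons_path last_rcons Gs Guw.
Qed.

Lemma horner_adjmx_neq0_dist_le (R : comNzRingType) n (G : rel 'I_n.+1) k
    (p : {poly R}) :
  (size p <= k.+1)%N ->
  forall v w, horner_mx (adjmx R G) p v w != 0 -> dist_le G k v w.
Proof.
move=> sp v w; rewrite -[p in horner_mx _ p]coefK poly_def rmorph_sum summxE.
case/sumr_neq0_exists => i /=; rewrite linearZ /= rmorphXn /= horner_mx_X mxE.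
case/mulr_neq0P/andP => _ /adjmx_exp_neq0_path [s [size_s Gs last_s]].
by exists s; split=> //; rewrite size_s -ltnS (leq_trans (ltn_ord i)).
Qed.

Lemma horner_mx_eigen (R : comNzRingType) n (A : 'M[R]_n.+1) (x : 'rV_n.+1) a
    (p : {poly R}) :
  x *m A = a *: x -> x *m horner_mx A p = p.[a] *: x.
Proof.
move=> xA; elim/poly_ind: p => [|p c IH].
  by rewrite !rmorph0 mulmx0 horner0 scale0r.
rewrite rmorphD rmorphM /= horner_mx_X horner_mx_C hornerMXaddC -mulmxE.
by rewrite mulmxDr mulmxA IH -scalemxAl xA mul_mx_scalar scalerA scalerDl.
Qed.

Section TraceForm.
Variables (C : numClosedFieldType) (m d : nat) (M : 'M[C]_m).

Definition trform (U V : 'M[C]_(m, d)) : C := \tr (U ^t* *m M *m V).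

Lemma trformE U V :
  trform U V = \sum_t \sum_v \sum_w (U v t)^* * M v w * V w t.
Proof.
rewrite /trform /mxtrace; apply: eq_bigr => t _; rewrite mxE.
under eq_bigr => w _ do rewrite mxE mulr_suml.
rewrite exchange_big; apply: eq_bigr => v _; apply: eq_bigr => w _.
by rewrite !mxE.
Qed.

Lemma trform_suml I (r : seq I) (F : I -> 'M[C]_(m, d)) V :
  trform (\sum_(i <- r) F i) V = \sum_(i <- r) trform (F i) V.
Proof.
rewrite /trform -linear_sum -!mulmx_suml; congr (\tr (_ *m _ *m _)).
apply/matrixP => i j; rewrite !(mxE, summxE) rmorph_sum.
by apply: eq_bigr => h _; rewrite !mxE.
Qed.

Lemma trform_sumr I (r : seq I) (F : I -> 'M[C]_(m, d)) U :
  trform U (\sum_(i <- r) F i) = \sum_(i <- r) trform U (F i).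
Proof. by rewrite /trform mulmx_sumr linear_sum. Qed.

Lemma trform_subl U V W : trform (U - V) W = trform U W - trform V W.
Proof. by rewrite /trform linearB /= map_mxB !mulmxBl linearB. Qed.

Lemma trform_subr U V W : trform W (U - V) = trform W U - trform W V.
Proof. by rewrite /trform mulmxBr linearB. Qed.

Lemma trform_sum_le c (F : 'I_c -> 'M[C]_(m, d)) :
  (forall Z, 0 <= trform Z Z) ->
  trform (\sum_h F h) (\sum_h F h) <= c%:R * \sum_h trform (F h) (F h).
Proof.
move=> trform_ge0.
set S := \sum_h F h; set D := \sum_h trform _ _; set T := trform S S.
have inner h : \sum_h' trform (F h - F h') (F h - F h') =
    trform (F h) (F h) *+ c - trform (F h) S - (trform S (F h) - D).
  under eq_bigr => h' _ do rewrite trform_subl !trform_subr.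
  by rewrite !sumrB sumr_const card_ord -trform_sumr -trform_suml.
have : 0 <= \sum_h \sum_h' trform (F h - F h') (F h - F h').
  by do 2!(apply: sumr_ge0 => ? _).
rewrite (eq_bigr _ (fun h _ => inner h)) !sumrB sumrMnl sumr_const card_ord.
rewrite -trform_suml -trform_sumr -/D -/T.
have -> : D *+ c - T - (T - D *+ c) = (c%:R * D - T) *+ 2.
  by rewrite -mulr_natl; ring.
by rewrite pmulrn_lge0 // subr_ge0.
Qed.

Lemma trform_ge0_diag l (P : 'M[C]_(l, m)) (E : 'rV[C]_l) :
  (forall j, 0 <= E 0 j) -> M = P ^t* *m diag_mx E *m P ->
  forall Z, 0 <= trform Z Z.
Proof.
move=> E_ge0 M_eq Z; rewrite /trform M_eq.
have -> : Z ^t* *m (P ^t* *m diag_mx E *m P) *m Z =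
    (P *m Z) ^t* *m diag_mx E *m (P *m Z) by rewrite trmx_mul map_mxM !mulmxA.
apply: sumr_ge0 => t _; rewrite mxE; apply: sumr_ge0 => j _.
by rewrite mul_mx_diag !mxE mulrAC mulr_ge0 // mulrC mul_conjC_ge0.
Qed.

End TraceForm.

Lemma spectral_diag_eigenvalue (C : numClosedFieldType) n (A : 'M[C]_n) j :
  A \is normalmx -> eigenvalue A (spectral_diag A 0 j).
Proof.
have P_unit := spectral_unit A.
move=> /orthomx_spectralP; set P := spectralmx A; set D := spectral_diag A.
move=> A_spec.
apply/eigenvalueP; exists (row j P).
  rewrite -row_mul A_spec !mulmxA mulmxV // mul1mx mul_diag_mx.
  by apply/rowP => t; rewrite !mxE.
apply: contraTneq isT => row0.
have := row_mul j P (invmx P); rewrite row0 mul0mx mulmxV // => /rowP/(_ j).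
by rewrite !mxE eqxx => /eqP; rewrite oner_eq0.
Qed.

Lemma trform_horner_ge0 (C : numClosedFieldType) n d (A : 'M[C]_n.+1)
    (q : {poly C}) :
  A \is normalmx -> (forall a, eigenvalue A a -> 0 <= q.[a]) ->
  forall Z : 'M_(n.+1, d), 0 <= trform (horner_mx A q) Z Z.
Proof.
move=> A_normal q_ge0; have /orthomx_spectralP A_spec := A_normal.
apply: (trform_ge0_diag (P := spectralmx A)
                        (E := map_mx (horner q) (spectral_diag A))).
  by move=> j; rewrite mxE; apply/q_ge0/spectral_diag_eigenvalue.
rewrite {1}A_spec horner_mx_uconjC ?spectral_unit // horner_mx_diag.
by rewrite invmx_unitary // spectral_unitarymx.
Qed.

Lemma qcoloring_quadform_le (C : numClosedFieldType) n (G : rel 'I_n) k c d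
    (P : 'I_n -> 'I_c -> 'M[C]_d) (M : 'M[C]_n) (x : 'I_n -> C) :
  (0 < d)%N -> quantum_kdist_coloring G k P ->
  (forall v w, M v w != 0 -> dist_le G k v w) ->
  (forall Z : 'M_(n, d), 0 <= trform M Z Z) ->
  \sum_v \sum_w (x v)^* * M v w * x w <= c%:R * \sum_v (x v)^* * x v * M v v.
Proof.
move=> d_gt0 [P_proj P_sum P_orth] M_dist M_psd; pose j0 := Ordinal d_gt0.
pose a h := \matrix_(v, t) (x v * P v h t j0) : 'M[C]_(n, d).
have a_sum : \sum_h a h = \matrix_(v, t) (x v * (t == j0)%:R).
  apply/matrixP => v t; rewrite summxE !mxE.
  under eq_bigr => h _ do rewrite mxE.
  by rewrite -mulr_sumr -summxE P_sum mxE.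
have a_entry h v w : \sum_t (a h v t)^* * M v w * a h w t =
    (x v)^* * M v w * x w * (P v h *m P w h) j0 j0.
  have [_ Ph_herm] := P_proj v h.
  rewrite [in RHS]mxE mulr_sumr; apply: eq_bigr => t _.
  have conjP : (P v h t j0)^* = P v h j0 t by rewrite -[in RHS]Ph_herm !mxE.
  by rewrite !mxE rmorphM /= conjP; ring.
have trform_a h :
    trform M (a h) (a h) = \sum_v (x v)^* * x v * M v v * P v h j0 j0.
  rewrite trformE exchange_big; apply: eq_bigr => v _.
  rewrite exchange_big (bigD1 v) //= [X in _ + X]big1 ?addr0 => [|w wv].
    by rewrite a_entry (proj1 (P_proj v h)); ring.
  rewrite a_entry; have [->|/M_dist vw] := eqVneq (M v w) 0.
    by rewrite !(mulr0, mul0r).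
  by rewrite P_orth 1?eq_sym // mxE mulr0.
have := trform_sum_le a M_psd; rewrite a_sum trformE (bigD1 j0) //=.
rewrite [X in _ + X]big1 ?addr0 => [|t tj0]; last first.
  by apply: big1 => v _; apply: big1 => w _; rewrite !mxE (negbTE tj0) !mulr0.
under [X in _ <= _ * X]eq_bigr => h _ do rewrite trform_a.
rewrite [X in _ <= _ * X]exchange_big.
under [X in _ <= _ * X]eq_bigr => v _ do
  rewrite -mulr_sumr -summxE P_sum mxE eqxx mulr1.
by under eq_bigr => v _ do under eq_bigr => w _ do rewrite !mxE eqxx !mulr1.
Qed.

Lemma quadform_eigen (R : comPzRingType) n (M : 'M[R]_n) (x : 'rV[R]_n) mu :
  x *m M = mu *: x ->
  \sum_v \sum_w x 0 v * M v w * x 0 w = mu * \sum_v x 0 v ^+ 2.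
Proof.
move=> /rowP xM; rewrite exchange_big mulr_sumr; apply: eq_bigr => w _.
have := xM w; rewrite !mxE -mulr_suml => ->; ring.
Qed.

Lemma trform_horner_real_ge0 (R : rcfType) n (A : 'M[R]_n.+1)
    (lam : 'I_n.+1 -> R) (q : {poly R}) :
  A^T = A -> char_poly A = \prod_i ('X - (lam i)%:P) ->
  (forall i, 0 <= q.[lam i]) ->
  forall d (Z : 'M[R[i]]_(n.+1, d)),
    0 <= trform (map_mx (real_complex R) (horner_mx A q)) Z Z.
Proof.
move=> A_sym A_char q_ge0 d; rewrite map_horner_mx; apply: trform_horner_ge0.
  have Ac_herm : (map_mx (real_complex R) A) ^t* = map_mx (real_complex R) A.
    by apply/matrixP => v w; rewrite -[in RHS]A_sym !mxE; apply: conjc_real.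
  by apply/normalmxP; rewrite Ac_herm.
move=> a; rewrite eigenvalue_root_char -map_char_poly A_char rmorph_prod.
rewrite /root horner_prod => /prodf_eq0 [i _].
rewrite /= map_polyXsubC hornerXsubC subr_eq0 => /eqP ->.
by rewrite horner_map lecR.
Qed.

Lemma conj_real_complex (R : rcfType) (a : R) : (a%:C%C : R[i])^* = a%:C%C.
Proof. exact: conjc_real. Qed.

Lemma qcoloring_real_quadform_le (R : rcfType) n (G : rel 'I_n) k c
    (M : 'M[R]_n) (x : 'rV[R]_n) :
  has_qkcoloring R G k c ->
  (forall v w, M v w != 0 -> dist_le G k v w) ->
  (forall d (Z : 'M[R[i]]_(n, d)),
    0 <= trform (map_mx (real_complex R) M) Z Z) ->
  \sum_v \sum_w x 0 v * M v w * x 0 w <= c%:R * \sum_v x 0 v ^+ 2 * M v v.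
Proof.
case=> d [P [d_gt0 P_col]] M_dist M_psd.
have := qcoloring_quadform_le (fun v => (x 0 v)%:C%C) d_gt0 P_col _ (M_psd d).
have Mc_dist v w : map_mx (real_complex R) M v w != 0 -> dist_le G k v w.
  by rewrite mxE fmorph_eq0; apply: M_dist.
move=> /(_ Mc_dist).
under eq_bigr => v _ do
  [under eq_bigr => w _ do rewrite mxE conj_real_complex -!rmorphM;
   rewrite -rmorph_sum].
under [X in _ <= _ * X -> _]eq_bigr => v _ do
  rewrite mxE conj_real_complex -!rmorphM -expr2.
by rewrite -!rmorph_sum -(rmorph_nat (real_complex R)) -rmorphM lecR.
Qed.

Lemma row_sqr_sum_gt0 (R : realDomainType) n (x : 'rV[R]_n) :
  x != 0 -> 0 < \sum_v x 0 v ^+ 2.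
Proof.
move=> x_nz; rewrite lt0r sumr_ge0 ?andbT => [|v _]; last exact: sqr_ge0.
rewrite psumr_eq0 => [|v _]; last exact: sqr_ge0.
apply: contra x_nz => /allP x0; apply/eqP/rowP => v; rewrite mxE.
by apply/eqP; rewrite -sqrf_eq0; apply: x0; rewrite mem_index_enum.
Qed.

Lemma qcoloring_eigen_le (R : rcfType) n (G : rel 'I_n.+1) k c
    (A : 'M[R]_n.+1) (lam : 'I_n.+1 -> R) (q : {poly R}) (x : 'rV_n.+1) a B :
  has_qkcoloring R G k c -> A^T = A ->
  char_poly A = \prod_i ('X - (lam i)%:P) -> (forall i, 0 <= q.[lam i]) ->
  (forall v w, horner_mx A q v w != 0 -> dist_le G k v w) ->
  x *m A = a *: x -> x != 0 -> (forall v, horner_mx A q v v <= B) ->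
  q.[a] <= c%:R * B.
Proof.
move=> G_col A_sym A_char q_ge0 q_dist x_eig x_nz diag_le.
rewrite -(ler_pM2r (row_sqr_sum_gt0 x_nz)).
have := qcoloring_real_quadform_le x G_col q_dist
  (trform_horner_real_ge0 A_sym A_char q_ge0).
rewrite (quadform_eigen (horner_mx_eigen q x_eig)) => /le_trans; apply.
rewrite -mulrA ler_wpM2l // mulr_sumr ler_sum // => v _.
by rewrite mulrC ler_wpM2r ?sqr_ge0.
Qed.

Lemma lamp_lt (R : realDomainType) n (lam : 'I_n.+1 -> R) (p : {poly R}) :
  (0 < n)%N -> (forall i, i != ord0 -> p.[lam i] < p.[lam ord0]) ->
  lamp lam p < p.[lam ord0].
Proof.
move=> n_gt0 p_max; rewrite /lamp.
elim/big_ind: _ => [||i]; last exact: p_max.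
  by apply: p_max; rewrite -(inj_eq val_inj) /= -lt0n.
by move=> a b a_lt b_lt; rewrite gt_min a_lt.
Qed.

Lemma lamp_le (R : realDomainType) n (lam : 'I_n.+1 -> R) (p : {poly R}) i :
  i != ord0 -> lamp lam p <= p.[lam i].
Proof. exact: (bigmin_le_cond _ (fun j => p.[lam j])). Qed.

Lemma Wp_ge (R : realDomainType) n (A : 'M[R]_n.+1) (p : {poly R}) v :
  horner_mx A p v v <= Wp A p.
Proof. exact: (le_bigmax _ (fun u => horner_mx A p u u)). Qed.

Theorem theorem5p2 (R : realType) (n : nat) (G : rel 'I_n.+1)
    (lam : 'I_n.+1 -> R) (k : nat) (p : {poly R}) :
  (0 < n)%N ->
  simple_graph G ->
  char_poly (adjmx R G) = \prod_(i < n.+1) ('X - (lam i)%:P) ->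
  (forall i j : 'I_n.+1, (i <= j)%N -> lam j <= lam i) ->
  (1 <= k)%N ->
  (size p <= k.+1)%N ->
  (forall i : 'I_n.+1, i != ord0 -> p.[lam i] < p.[lam ord0]) ->
  forall c : nat, has_qkcoloring R G k c ->
    (p.[lam ord0] - lamp lam p) / (Wp (adjmx R G) p - lamp lam p) <= c%:R.
Proof.
move=> n_gt0 [G_sym _] A_char _ _ size_p p_max c G_col.
set A := adjmx R G; set L := lamp lam p; set W := Wp A p; set q := p - L%:P.
have L_lt : L < p.[lam ord0] by apply: lamp_lt.
have qE y : q.[y] = p.[y] - L by rewrite hornerD hornerN hornerC.
have q_ge0 i : 0 <= q.[lam i].
  rewrite qE subr_ge0.
  by have [->|/lamp_le] := eqVneq i ord0; [exact: ltW | apply].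
have size_q : (size q <= k.+1)%N.
  rewrite (leq_trans (size_polyD _ _)) // geq_max size_p size_polyN.
  exact: leq_trans (size_polyC_leq1 _) _.
have /eigenvalueP [x x_eig x_nz] : eigenvalue A (lam ord0).
  rewrite eigenvalue_root_char A_char /root horner_prod; apply/prodf_eq0.
  by exists ord0 => //; rewrite hornerXsubC subrr.
have diag_le v : horner_mx A q v v <= W - L.
  by rewrite rmorphB /= horner_mx_C !mxE eqxx mulr1n lerD2r Wp_ge.
have := qcoloring_eigen_le G_col (adjmx_tr R G_sym) A_char q_ge0
  (horner_adjmx_neq0_dist_le size_q) x_eig x_nz diag_le.
rewrite qE => mu_le.
have WL_gt0 : 0 < W - L.
  rewrite ltNge; apply: contraTN L_lt => WL_le0.
  by rewrite -leNgt -subr_le0 (le_trans mu_le) // mulr_ge0_le0.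
by rewrite ler_pdivrMr.
Qed.
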